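(* Let $\mathcal O$ be the suboperad of $\mathrm{CNCB}$ generated by $a:=T_{bbb}$ and $c:=T_{buu}$. Then $\mathcal O$ admits the presentation with generators $a,c$ of arity $2$ and relations $$(c\circ_2 a)\circ_3 c = (c\circ_1 c)\circ_2 a,\qquad (a\circ_2 c)\circ_3 a=(a\circ_1 c)\circ_2 a.$$ That is, the operad morphism from the free operad on two binary generators $\alpha,\gamma$ to $\mathcal O$, sending $\alpha\mapsto a$ and $\gamma\mapsto c$, induces an isomorphism between $\mathcal O$ and the quotient of the free operad by the operadic congruence generated by $(\gamma\circ_2\alpha)\circ_3\gamma\equiv(\gamma\circ_1\gamma)\circ_2\alpha$ and $(\alpha\circ_2\gamma)\circ_3\alpha\equiv(\alpha\circ_1\gamma)\circ_2\alpha$.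
   Context: For $n\ge2$, a bicoloured noncrossing configuration (BNC) of size $n$ is a regular polygon with vertices $1,\dots,n+1$ clockwise, together with disjoint sets of blue and red arcs among the arcs $(i,j)$, $1\le i<j\le n+1$. The arcs $(i,i+1)$ are the edges ($i$th edge), $(1,n+1)$ is the base, and the others are diagonals. Coloured arcs are pairwise noncrossing ($(i,j),(k,l)$ cross iff $i<k<j<l$ or $k<i<l<j$), and red arcs are diagonals. There is one BNC of size $1$, a blue segment, which is the unit. The operad $\mathrm{CNCB}$ has the BNCs as elements (arity = size). Its composition $\mathfrak C\circ_i\mathfrak D$ ($\mathfrak C$ of size $n$, $\mathfrak D$ of size $m$) glues the base of $\mathfrak D$ on the $i$th edge of $\mathfrak C$. Arcs $(a,b)$ of $\mathfrak C$ become $(\sigma(a),\sigma(b))$ with $\sigma(v)=v$ for $v\le i$ and $v+m-1$ otherwise, and arcs $(a,b)$ of $\mathfrak D$ become $(a+i-1,b+i-1)$, keeping colours. The exception is the arc $(i,i+m)$, which is red if the $i$th edge of $\mathfrak C$ and the base of $\mathfrak D$ are both uncoloured, blue if both are blue, and uncoloured otherwise. For $x,y,z\in\{b,u\}$, $T_{xyz}$ denotes the BNC of size $2$ (a triangle with vertices $1,2,3$) whose first edge $(1,2)$ has colour $x$, whose base $(1,3)$ has colour $y$, and whose second edge $(2,3)$ has colour $z$, where $b$ = blue and $u$ = uncoloured. The suboperad generated by a set is the smallest suboperad containing it. *)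

From HB Require Import structures.
From mathcomp Require Import all_boot.
Set Implicit Arguments. Unset Strict Implicit. Unset Printing Implicit Defensive.

Inductive color := Unc | Blue | Red.

Definition color_eqb (x y : color) : bool :=
  match x, y with
  | Unc, Unc | Blue, Blue | Red, Red => true | _, _ => false end.
Lemma color_eqP : Equality.axiom color_eqb.
Proof. by case; case; constructor. Qed.
HB.instance Definition _ := hasDecEq.Build color color_eqP.

(* ---------- Bicoloured configurations ----------
   A configuration of size n (vertices 1..n+1) is stored as the pair
   (n, list of the colours of the arcs (i,j), 1 <= i < j <= n+1,
   listed in the fixed order [arcs n]).  Equality is thus extensional. *)
Definition arcs (n : nat) : seq (nat * nat) :=
  flatten [seq [seq (i, j) | j <- iota i.+1 (n.+1 - i)] | i <- iota 1 n.+1].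

Definition cncb := (nat * seq color)%type.
Definition csize (x : cncb) : nat := x.1.
(* colour of the arc (i,j) (uncoloured if (i,j) is not an arc) *)
Definition col (x : cncb) (i j : nat) : color :=
  nth Unc x.2 (index (i, j) (arcs x.1)).
Definition mkc (n : nat) (f : nat -> nat -> color) : cncb :=
  (n, [seq f p.1 p.2 | p <- arcs n]).

Definition cunit : cncb := mkc 1 (fun _ _ => Blue).

(* Triangle T_xyz: first edge (1,2) colour x, base (1,3) colour y,
   second edge (2,3) colour z. *)
Definition T (x y z : color) : cncb :=
  mkc 2 (fun i j => if (i, j) == (1, 2) then x
                    else if (i, j) == (1, 3) then y else z).

(* Partial composition C o_i D, glueing the base of D on the i-th edge of C.
   Result has size n + m - 1 where n = size C, m = size D. *)
Definition ccomp (C : cncb) (i : nat) (D : cncb) : cncb :=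
  let n := csize C in let m := csize D in
  let sinv v := if v <= i then v else v - m + 1 in
  mkc (n + m - 1) (fun p q =>
    if (p == i) && (q == i + m) then
      let e := col C i i.+1 in let b := col D 1 m.+1 in
      if (e == Unc) && (b == Unc) then Red
      else if (e == Blue) && (b == Blue) then Blue else Unc
    else if (i <= p) && (q <= i + m) then col D (p - i + 1) (q - i + 1)
    else if ((i < p) && (p < i + m)) || ((i < q) && (q < i + m)) then Unc
    else col C (sinv p) (sinv q)).

Definition ca : cncb := T Blue Blue Blue.
Definition cc : cncb := T Blue Unc Unc.

Inductive inO : cncb -> Prop :=
  | inO_unit : inO cunit
  | inO_a : inO ca
  | inO_c : inO cc
  | inO_comp x y i : inO x -> inO y -> 1 <= i <= csize x -> inO (ccomp x i y).

(* ---------- The free (nonsymmetric) operad on two binary generators ----------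
   Node true = alpha, Node false = gamma.  Leaves = inputs. *)
Inductive tree := Leaf | Node of bool & tree & tree.

Fixpoint arity (t : tree) : nat :=
  match t with Leaf => 1 | Node _ l r => arity l + arity r end.

Fixpoint graft (t : tree) (i : nat) (s : tree) : tree :=
  match t with
  | Leaf => if i == 1 then s else Leaf
  | Node g l r => if i <= arity l then Node g (graft l i s) r
                  else Node g l (graft r (i - arity l) s)
  end.

Definition alpha : tree := Node true Leaf Leaf.
Definition gamma : tree := Node false Leaf Leaf.

Definition rel1_l := graft (graft gamma 2 alpha) 3 gamma.
Definition rel1_r := graft (graft gamma 1 gamma) 2 alpha.
Definition rel2_l := graft (graft alpha 2 gamma) 3 alpha.
Definition rel2_r := graft (graft alpha 1 gamma) 2 alpha.

Inductive cong : tree -> tree -> Prop :=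
  | cong_refl t : cong t t
  | cong_sym t u : cong t u -> cong u t
  | cong_trans t u v : cong t u -> cong u v -> cong t v
  | cong_rel1 : cong rel1_l rel1_r
  | cong_rel2 : cong rel2_l rel2_r
  | cong_compl t t' i s : cong t t' -> 1 <= i <= arity t ->
      cong (graft t i s) (graft t' i s)
  | cong_compr t i s s' : cong s s' -> 1 <= i <= arity t ->
      cong (graft t i s) (graft t i s').

(* The operad morphism free operad -> CNCB, alpha |-> a, gamma |-> c.
   Node g l r = (g o_2 r) o_1 l in the free operad. *)
Definition gen_el (g : bool) : cncb := if g then ca else cc.
Fixpoint eval (t : tree) : cncb :=
  match t with
  | Leaf => cunit
  | Node g l r => ccomp (ccomp (gen_el g) 2 (eval r)) 1 (eval l)
  end.

From mathcomp Require Import all_boot zify.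
Set Implicit Arguments. Unset Strict Implicit. Unset Printing Implicit Defensive.

(* The configuration [eval t] is given by an explicit colouring [tree_col t] of the
   arcs of the triangulation dual to [t], and grafting on trees matches composition of
   these colourings, so [eval] is an operad morphism onto the suboperad generated by
   [a] and [c].  Read from right to left, the two relations rotate away every left
   child of the form [gamma x (alpha y z)]; a weight argument shows that every tree is
   congruent to a normal one, without such left children.  A normal tree is recovered
   from its colouring: the root generator is the colour of the base, and the apex of
   the root triangle is reached from the last blue arc out of vertex 1 by walking
   across the red arcs and uncoloured edges left by the gamma-nodes of the left spine.
   So [eval] is injective on normal trees and its kernel is the congruence. *)

Lemma mem_arcs n i j : ((i, j) \in arcs n) = [&& 0 < i, i < j & j <= n.+1].
Proof.
apply/idP/idP.
- case/flatten_mapP => i'; rewrite mem_iota => /andP [? ?].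
  by case/mapP => j'; rewrite mem_iota => /andP [? ?] [-> ->]; apply/and3P; split; lia.
- case/and3P => ? ? ?; apply/flatten_mapP; exists i; first by rewrite mem_iota; lia.
  by apply/mapP; exists j => //; rewrite mem_iota; lia.
Qed.

Lemma col_mkc n f i j : 0 < i -> i < j -> j <= n.+1 -> col (mkc n f) i j = f i j.
Proof.
move=> ? ? ?; have arc_ij : (i, j) \in arcs n by rewrite mem_arcs; apply/and3P.
by rewrite /col /= (nth_map (0, 0)) ?index_mem // nth_index.
Qed.

Lemma eq_mkc n f g :
  (forall i j, 0 < i -> i < j -> j <= n.+1 -> f i j = g i j) -> mkc n f = mkc n g.
Proof.
move=> eq_fg; congr pair; apply/eq_in_map => -[i j].
by rewrite mem_arcs => /and3P [? ? ?]; exact: eq_fg.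
Qed.

Definition glue_col (e b : color) : color :=
  if (e == Unc) && (b == Unc) then Red
  else if (e == Blue) && (b == Blue) then Blue else Unc.

Definition comp_col (f : nat -> nat -> color) (i m : nat) (h : nat -> nat -> color)
    (p q : nat) : color :=
  let sinv v := if v <= i then v else v - m + 1 in
  if (p == i) && (q == i + m) then glue_col (f i i.+1) (h 1 m.+1)
  else if (i <= p) && (q <= i + m) then h (p - i + 1) (q - i + 1)
  else if ((i < p) && (p < i + m)) || ((i < q) && (q < i + m)) then Unc
  else f (sinv p) (sinv q).

Lemma ccomp_mkc n f i m h : 0 < i <= n -> 0 < m ->
  ccomp (mkc n f) i (mkc m h) = mkc (n + m - 1) (comp_col f i m h).
Proof.
move=> /andP [? ?] ?; rewrite /ccomp /=; apply: eq_mkc => p q ? ? ?.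
rewrite /comp_col /glue_col.
case: ifP => [/andP [/eqP ? /eqP ?]|_]; first by subst; rewrite !col_mkc //; lia.
case: ifP => [/andP [? ?]|_]; first by rewrite col_mkc //; lia.
by case: ifP => // not_inside; rewrite col_mkc //; repeat case: ifP; lia.
Qed.

Definition gen_col (g : bool) : color := if g then Blue else Unc.
Definition base_col (t : tree) : color := if t is Node false _ _ then Unc else Blue.

(* The root triangle of [Node g l r] is [(1, arity l + 1, arity t + 1)]; [l] hangs
   below its first edge and [r], shifted by [arity l], below its second edge, whose
   colour is glued with the base of [r]. *)
Fixpoint tree_col (t : tree) (i j : nat) : color :=
  match t with
  | Leaf => if (i == 1) && (j == 2) then Blue else Unc
  | Node g l r =>
    if (i == 1) && (j == (arity l + arity r).+1) then gen_col g
    else if j <= (arity l).+1 then tree_col l i j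
    else if (arity l).+1 <= i then
      (if (i == (arity l).+1) && (j == (arity l + arity r).+1)
       then glue_col (gen_col g) (base_col r)
       else tree_col r (i - arity l) (j - arity l))
    else Unc
  end.

Lemma tree_colN g l r i j : tree_col (Node g l r) i j =
    if (i == 1) && (j == (arity l + arity r).+1) then gen_col g
    else if j <= (arity l).+1 then tree_col l i j
    else if (arity l).+1 <= i then
      (if (i == (arity l).+1) && (j == (arity l + arity r).+1)
       then glue_col (gen_col g) (base_col r)
       else tree_col r (i - arity l) (j - arity l))
    else Unc.
Proof. by []. Qed.

Lemma arity_gt0 t : 0 < arity t.
Proof. by elim: t => //= g l IHl r IHr; lia. Qed.

Lemma tree_col_base t : tree_col t 1 (arity t).+1 = base_col t.
Proof. by case: t => [|[] l r] //=; rewrite !eqxx. Qed.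

Lemma base_col_neq_Red t : base_col t != Red.
Proof. by case: t => [|[] ? ?]. Qed.

Ltac case_ifs := repeat (simpl; match goal with |- context[if ?c then _ else _] =>
  (match c with context[if _ then _ else _] => fail 1 | _ => idtac end);
  let C := fresh "C" in case C: c; try (exfalso; lia) end).

Lemma eval_mkc t : eval t = mkc (arity t) (tree_col t).
Proof.
elim: t => [|g l IHl r IHr].
  by apply: eq_mkc => i j ? ? ?; have [-> ->] : i = 1 /\ j = 2 by lia.
have := arity_gt0 l; have := arity_gt0 r => ? ?.
have gen_mkc : gen_el g = mkc 2 (fun i j => if (i, j) == (1, 2) then Blue else gen_col g).
  by case: g; apply: eq_mkc => i j ? ? ? /=; case: ifP => //; case: ifP.
rewrite /= IHl IHr gen_mkc ccomp_mkc // ccomp_mkc; [|lia|lia].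
rewrite (_ : 2 + arity r - 1 + arity l - 1 = arity l + arity r); last lia.
apply: eq_mkc => p q ? ? ?; rewrite /comp_col (tree_col_base l) (tree_col_base r) ?xpair_eqE.
have := base_col_neq_Red r; have := base_col_neq_Red l.
case: g {gen_mkc}; case El: (base_col l) => //; case: (base_col r) => // _ _; case_ifs.
all: try reflexivity; try (congr tree_col; lia).
all: have [-> ->] : p = 1 /\ q = (arity l).+1 by lia.
all: by rewrite tree_col_base El.
Qed.

Lemma arity_graft t i s : 0 < i <= arity t -> arity (graft t i s) = arity t + arity s - 1.
Proof.
elim: t i => [|g l IHl r IHr] i /= Hi.
  by case: i Hi => [|[|i]] //= _; lia.
have := arity_gt0 l; have := arity_gt0 r; have := arity_gt0 s => ? ? ?.
by case: ifP => ? /=; [rewrite IHl | rewrite IHr]; lia.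
Qed.

Lemma base_col_graft g l r i s : base_col (graft (Node g l r) i s) = base_col (Node g l r).
Proof. by rewrite /=; case: ifP. Qed.

Lemma tree_col_shift g l r p q : 0 < p -> p < q -> q <= (arity r).+1 ->
    ~ (p = 1 /\ q = (arity r).+1) ->
  tree_col (Node g l r) (arity l + p) (arity l + q) = tree_col r p q.
Proof. by move=> *; rewrite tree_colN; case_ifs; congr tree_col; lia. Qed.

Lemma comp_col_translate c M F G i S H p q :
    (forall a b, 0 < a -> a < b -> b <= M.+1 -> ~ (a = 1 /\ b = M.+1) ->
       F (c + a) (c + b) = G a b) ->
    1 < M -> 0 < i <= M -> 0 < S -> 0 < p -> p < q -> q <= M + S ->
    ~ (p = 1 /\ q = M + S) ->
  comp_col F (c + i) S H (c + p) (c + q) = comp_col G i S H p q.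
Proof.
move=> FG *; rewrite /comp_col; case_ifs; try reflexivity; try (f_equal; lia).
all: try (match goal with |- glue_col (?f ?x ?y) _ = glue_col (?g ?u ?v) _ =>
  rewrite -(FG u v); [do 2 f_equal; lia | lia ..] end).
all: match goal with |- ?f ?x ?y = ?g ?u ?v =>
  rewrite -(FG u v); [f_equal; lia | lia ..] end.
Qed.

Lemma tree_col_graft_Leaf s p q : 0 < p -> p < q -> q <= (arity s).+1 ->
  tree_col s p q = comp_col (tree_col Leaf) 1 (arity s) (tree_col s) p q.
Proof.
move=> ? ? ?; rewrite /comp_col; have := base_col_neq_Red s.
case Es: (base_col s) => // _; case_ifs; try reflexivity; try (congr tree_col; lia).
all: have [-> ->] : p = 1 /\ q = (arity s).+1 by lia.
all: by rewrite tree_col_base Es.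
Qed.

Lemma tree_col_graft_left g l r i s p q :
    (forall p q, 0 < p -> p < q -> q <= arity l + arity s ->
       tree_col (graft l i s) p q = comp_col (tree_col l) i (arity s) (tree_col s) p q) ->
    0 < i <= arity l -> 0 < p -> p < q -> q <= arity l + arity r + arity s ->
  tree_col (Node g (graft l i s) r) p q =
    comp_col (tree_col (Node g l r)) i (arity s) (tree_col s) p q.
Proof.
move=> IHl *; have := arity_gt0 r; have := arity_gt0 s => ? ?.
rewrite /comp_col !tree_colN arity_graft //.
case_ifs; try reflexivity; try (f_equal; lia).
all: rewrite IHl; [|lia ..]; rewrite /comp_col; case_ifs; try reflexivity; f_equal; lia.
Qed.

Lemma tree_col_graft_last g l s p q : 0 < p -> p < q -> q <= (arity l + arity s).+1 ->
  tree_col (Node g l s) p q =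
    comp_col (tree_col (Node g l Leaf)) (arity l).+1 (arity s) (tree_col s) p q.
Proof.
move=> *; have := arity_gt0 l; have := arity_gt0 s => ? ?.
rewrite /comp_col !tree_colN tree_col_base; have := base_col_neq_Red s.
case: (base_col s) => // _; case_ifs; try reflexivity; try (f_equal; lia).
all: by case: g.
Qed.

Lemma tree_col_graft_right g l r r' j S h p q :
    1 < arity r -> 0 < j <= arity r -> 0 < S ->
    arity r' = arity r + S - 1 -> base_col r' = base_col r ->
    (forall p q, 0 < p -> p < q -> q <= (arity r').+1 ->
       tree_col r' p q = comp_col (tree_col r) j S h p q) ->
    0 < p -> p < q -> q <= (arity l + arity r').+1 ->
  tree_col (Node g l r') p q = comp_col (tree_col (Node g l r)) (arity l + j) S h p q.
Proof.
move=> ? ? ? Ar' Br' IHr ? ? ?.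
case: (boolP ((arity l < p) && ~~ ((p == (arity l).+1) && (q == (arity l + arity r').+1))))
  => [/andP [? ?]|irregular].
- have [-> ->] : p = arity l + (p - arity l) /\ q = arity l + (q - arity l) by lia.
  rewrite tree_col_shift ?IHr; [|lia ..].
  rewrite (@comp_col_translate _ (arity r) _ (tree_col r)) //; [|lia ..].
  by move=> *; rewrite tree_col_shift.
- by rewrite /comp_col !tree_colN Ar' Br'; case_ifs; try reflexivity; f_equal; lia.
Qed.

Lemma tree_col_graft t i s p q : 0 < i <= arity t -> 0 < p -> p < q ->
    q <= arity t + arity s ->
  tree_col (graft t i s) p q = comp_col (tree_col t) i (arity s) (tree_col s) p q.
Proof.
elim: t i p q => [|g l IHl r IHr] i p q i_range ? ? q_le; rewrite /= in i_range q_le.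
  by rewrite (_ : i = 1); [exact: tree_col_graft_Leaf | lia].
rewrite [graft _ _ _]/=; case: ifP => [il|/negbT].
  by apply: tree_col_graft_left; try lia; move=> *; apply: IHl; lia.
rewrite -ltnNge; case: r IHr i_range q_le => [|g' a b] IHr i_range q_le li.
  rewrite /= in i_range q_le; rewrite (_ : i = (arity l).+1) ?subSnn; last lia.
  by apply: tree_col_graft_last => //=; lia.
have j_range : 0 < i - arity l <= arity (Node g' a b) by lia.
have arity_r : 1 < arity (Node g' a b).
  by rewrite /=; have := arity_gt0 a; have := arity_gt0 b; lia.
rewrite -[X in comp_col _ X](subnKC (ltnW li)).
apply: (tree_col_graft_right g arity_r j_range (arity_gt0 s) (arity_graft _ j_range)
  (base_col_graft _ _ _ _ _)) => //; last by rewrite arity_graft //; lia.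
move=> p1 q1 ? ?; rewrite arity_graft // => ?; have := arity_gt0 s.
by move=> ?; apply: IHr; lia.
Qed.

Lemma csize_eval t : csize (eval t) = arity t.
Proof. by rewrite eval_mkc. Qed.

Lemma eval_graft t i s : 0 < i <= arity t ->
  eval (graft t i s) = ccomp (eval t) i (eval s).
Proof.
move=> ?; rewrite !eval_mkc ccomp_mkc ?arity_graft //; last exact: arity_gt0.
by apply: eq_mkc => *; apply: tree_col_graft; lia.
Qed.

Lemma eval_cong t1 t2 : cong t1 t2 -> eval t1 = eval t2.
Proof.
elim=> {t1 t2} [//|t u _ -> //|t u v _ -> _ -> //|||t t' i s _ IH ?|t i s s' _ IH ?].
- by vm_compute.
- by vm_compute.
- by rewrite !eval_graft // -?csize_eval -?IH ?csize_eval.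
- by rewrite !eval_graft // IH.
Qed.

Lemma inO_eval x : inO x <-> exists t, eval t = x.
Proof.
split.
- elim=> [|||x' y i _ [t <-] _ [s <-] ?]; [exists Leaf | exists alpha | exists gamma |] => //.
  by exists (graft t i s); rewrite eval_graft // -csize_eval.
- case=> t <-; elim: t => [|g l IHl r IHr] /=; first exact: inO_unit.
  have gen_in : inO (gen_el g) by case: g; [exact: inO_a | exact: inO_c].
  apply: inO_comp; [apply: inO_comp => // | exact: IHl |]; first by case: g {gen_in}.
  by rewrite /ccomp /csize /=; have := arity_gt0 r; case: g {gen_in} => /=; lia.
Qed.

Lemma cong_arity t u : cong t u -> arity t = arity u.
Proof. by move/eval_cong => E; rewrite -!csize_eval E. Qed.

Lemma cong_Node g l l' r r' : cong l l' -> cong r r' -> cong (Node g l r) (Node g l' r').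
Proof.
move=> Cl Cr; have := arity_gt0 r; have := arity_gt0 r' => ? ?.
apply: (@cong_trans _ (graft (Node g Leaf r) 1 l')).
  by apply: (@cong_compr (Node g Leaf r) 1) => //=; lia.
rewrite (_ : Node g l' r' = graft (graft (Node g Leaf Leaf) 2 r') 1 l') //.
rewrite (_ : Node g Leaf r = graft (Node g Leaf Leaf) 2 r) //.
apply: cong_compl; last by rewrite arity_graft /=; lia.
exact: cong_compr.
Qed.

Lemma cong_graft4 t u x y z w : cong t u -> arity t = 4 ->
  cong (graft (graft (graft (graft t 4 w) 3 z) 2 y) 1 x)
       (graft (graft (graft (graft u 4 w) 3 z) 2 y) 1 x).
Proof.
move=> C At; have := cong_arity C; rewrite At => Au.
have := arity_gt0 x; have := arity_gt0 y; have := arity_gt0 z; have := arity_gt0 w => ? ? ? ?.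
by do 4 (apply: cong_compl; rewrite ?arity_graft ?At; try lia).
Qed.

(* The two defining relations, read from right to left. *)
Lemma cong_rotate g x y z w :
  cong (Node g (Node false x (Node true y z)) w) (Node g x (Node (~~ g) y (Node g z w))).
Proof.
have := arity_gt0 x; have := arity_gt0 y; have := arity_gt0 z; have := arity_gt0 w => ? ? ? ?.
case: g; [move: (cong_graft4 x y z w (cong_sym cong_rel2) erefl)
         | move: (cong_graft4 x y z w (cong_sym cong_rel1) erefl)].
all: by rewrite /= ?addn1; repeat (case: ifP => ?; try (exfalso; lia)).
Qed.

Definition redex (t : tree) : bool :=
  if t is Node false _ (Node true _ _) then true else false.

Fixpoint normal (t : tree) : bool :=
  if t is Node _ l r then [&& ~~ redex l, normal l & normal r] else true.

Fixpoint weight (t : tree) : nat :=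
  if t is Node _ l r then weight l + weight r + arity l else 0.

Lemma normal_form_exists t : exists2 u, cong t u & normal u.
Proof.
suff: forall n t, weight t < n -> exists u, [/\ cong t u, normal u & weight u <= weight t].
  by move=> /(_ _ t (ltnSn _)) [u [? ? ?]]; exists u.
elim=> [|n IH] [|g l r] //= lt_n; first by exists Leaf; split=> //; exact: cong_refl.
have := arity_gt0 l => ?.
have [l' [Cl Nl Wl]] := IH l (ltac:(lia)); have [r' [Cr Nr Wr]] := IH r (ltac:(lia)).
have Al := cong_arity Cl.
case Rl: (redex l'); last first.
  exists (Node g l' r'); split; first exact: cong_Node.
    by rewrite /= Rl Nl Nr.
  by rewrite /= -Al; lia.
move: Rl Cl Nl Wl Al; case: l' => [|[] x [|[] y z]] //= _ Cl Nl Wl Al.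
have := arity_gt0 x; have := arity_gt0 y => ? ?.
have [u [Cu Nu Wu]] := IH (Node g x (Node (~~ g) y (Node g z r'))) (ltac:(rewrite /=; lia)).
exists u; split=> //; last by move: Wu => /=; lia.
exact: cong_trans (cong_Node g Cl Cr) (cong_trans (cong_rotate g x y z r') Cu).
Qed.

Fixpoint last_sat (P : pred nat) (n : nat) : nat :=
  if n is n'.+1 then (if P n then n else last_sat P n') else 0.

Lemma last_sat_eq (P : pred nat) n w : 0 < w <= n -> P w ->
  (forall j, w < j <= n -> ~~ P j) -> last_sat P n = w.
Proof.
elim: n => [|n IH] w_range Pw above_w /=; first lia.
case: (ltngtP w n.+1) => [w_lt|?|w_eq]; [|lia|by rewrite -w_eq Pw].
rewrite ifF; last by apply/negbTE/above_w; lia.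
by apply: IH => // [|j ?]; [lia | apply: above_w; lia].
Qed.

Lemma last_sat0 (P : pred nat) n : (forall j, 0 < j <= n -> ~~ P j) -> last_sat P n = 0.
Proof.
elim: n => [|n IH] noP //=; rewrite ifF; last by apply/negbTE/noP; lia.
by apply: IH => j ?; apply: noP; lia.
Qed.

Lemma last_satP (P : pred nat) n :
  last_sat P n = 0 \/ P (last_sat P n) /\ 0 < last_sat P n <= n.
Proof.
elim: n => [|n IH] /=; first by left.
case: ifP => [|_]; first by right; split=> //; lia.
by case: IH => [->|[? ?]]; [left | right; split=> //; lia].
Qed.

Lemma tree_col_1_neq_Red t j : tree_col t 1 j != Red.
Proof.
elim: t j => [|g l IHl r IHr] j; first by rewrite /=; case: ifP.
have := arity_gt0 l => ?; rewrite tree_colN; case: ifP => _; first by case: g.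
by case: ifP => _ //; case: ifP => ?; [lia | ].
Qed.

Lemma tree_col_12 t : tree_col t 1 2 = Blue.
Proof.
elim: t => [|g l IHl r _] //; have := arity_gt0 l; have := arity_gt0 r => ? ?.
by rewrite tree_colN ifF ?ifT //; lia.
Qed.

Fixpoint last_blue (t : tree) : nat :=
  match t with
  | Leaf => 2
  | Node true l r => (arity l + arity r).+1
  | Node false l _ => last_blue l
  end.

Lemma last_blue_spec t : [/\ 2 <= last_blue t <= (arity t).+1,
  tree_col t 1 (last_blue t) = Blue &
  forall j, last_blue t < j <= (arity t).+1 -> tree_col t 1 j != Blue].
Proof.
elim: t => [|[] l IHl r _]; first by split=> //= j; lia.
all: have := arity_gt0 l; have := arity_gt0 r => ? ?.
  by split=> /=; [lia | rewrite !eqxx | lia].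
case: IHl => ? blue_l above_l; split=> /=; first lia.
  by rewrite ifF ?ifT //; lia.
move=> j ?; case: ifP => _ //; case: ifP => ?; first by apply: above_l; lia.
by rewrite ifF //; lia.
Qed.

Definition walk_step (f : nat -> nat -> color) (N w : nat) : nat :=
  let v := last_sat (fun v => (w < v) && (f w v == Red)) N in
  let v' := if v != 0 then v else if f w w.+1 == Unc then w.+1 else w in
  if v' < N then v' else w.

Definition apex (f : nat -> nat -> color) (n : nat) : nat :=
  iter n (walk_step f n.+1) (last_sat (fun j => f 1 j == Blue) n).

Lemma walk_reaches_end s f N : normal s -> ~~ redex s ->
    (forall w v, 2 <= w -> w < v -> v <= (arity s).+1 -> f w v = tree_col s w v) ->
    (forall w v, 2 <= w -> w <= arity s -> (arity s).+1 < v -> v <= N -> f w v = Unc) ->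
    (arity s).+1 < N ->
  exists2 d, d <= arity s & iter d (walk_step f N) (last_blue s) = (arity s).+1.
Proof.
elim: s => [|g a IHa b _] Ns Rs inside outside N_gt; first by exists 0.
rewrite [arity (Node _ _ _)]/= in inside outside N_gt *.
case: g Ns Rs inside outside => Ns Rs inside outside; first by exists 0 => /=; lia.
have := arity_gt0 a; have := arity_gt0 b => b_pos ?; case/and3P: Ns => Ra Na Nb.
have [d le_d walk_a] :
    exists2 d, d <= arity a & iter d (walk_step f N) (last_blue a) = (arity a).+1.
  apply: IHa => //= [w v ? ? ?|w v ? ? ? ?|]; last lia.
    by rewrite inside /= 1?ifF ?ifT //; lia.
  case: (leqP v (arity a + arity b).+1) => ?; last by rewrite outside //=; lia.
  by rewrite inside /= ?ifF //; lia.
exists d.+1; first by rewrite /=; lia.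
rewrite iterS /= walk_a /walk_step.
have glued : f (arity a).+1 (arity a + arity b).+1 = glue_col Unc (base_col b).
  by rewrite inside /=; [case_ifs | lia ..].
case: b b_pos Rs Nb inside outside N_gt glued
  => [|[] b1 b2] //= _ _ _ inside outside N_gt glued.
- rewrite (_ : (arity a + 1).+1 = (arity a).+2) in glued; last lia.
  rewrite last_sat0; first by rewrite glued /= ifT //; lia.
  move=> j ?; apply/negP => /andP [? /eqP red_j].
  case: (ltngtP j (arity a).+2) => [?|?|j_eq]; first lia.
    by move: red_j; rewrite outside //; lia.
  by move: red_j; rewrite j_eq glued.
- rewrite (@last_sat_eq _ N (arity a + (arity b1 + arity b2)).+1) /=.
  + by rewrite ifT.
  + lia.
  + by rewrite glued /= andbT; have := arity_gt0 b1; lia.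
  + by move=> j ?; rewrite outside ?andbF //; have := arity_gt0 b1; lia.
Qed.

Section Apex.

Variables (g : bool) (l r : tree) (f : nat -> nat -> color).
Hypothesis f_col : forall w v, 0 < w -> w < v -> v <= (arity l + arity r).+1 ->
  f w v = tree_col (Node g l r) w v.

Lemma last_blue_root : last_sat (fun j => f 1 j == Blue) (arity l + arity r) = last_blue l.
Proof.
have := arity_gt0 l; have := arity_gt0 r => ? ?.
have [? blue_l above_l] := last_blue_spec l.
apply: last_sat_eq => [|//=|j ?]; first lia.
  by rewrite f_col /=; [case_ifs; rewrite blue_l | lia ..].
by rewrite f_col /=; [case_ifs; try (apply: above_l; lia) | lia ..].
Qed.

Lemma walk_step_apex : walk_step f (arity l + arity r).+1 (arity l).+1 = (arity l).+1.
Proof.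
have := arity_gt0 l; have := arity_gt0 r => ? ?.
have right_col v : (arity l).+1 < v < (arity l + arity r).+1 ->
    f (arity l).+1 v = tree_col r 1 (v - arity l).
  by move=> ?; rewrite f_col /=; [case_ifs; congr tree_col; lia | lia ..].
rewrite /walk_step.
have [->|[/andP [lt_v red_v] v_range]] := last_satP
  (fun v => ((arity l).+1 < v) && (f (arity l).+1 v == Red)) (arity l + arity r).+1.
  rewrite /=; case: (ltngtP (arity l).+2 (arity l + arity r).+1) => [?|?|<-]; last first.
  - by case: (f _ _ == Unc); rewrite ?ltnn ?ltnSn.
  - lia.
  have -> : f (arity l).+1 (arity l).+2 = Blue.
    rewrite right_col; last lia.
    have -> : (arity l).+2 - arity l = 2 by lia.
    exact: tree_col_12.
  by rewrite /= ifT //; lia.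
set v := last_sat _ _ in lt_v red_v v_range *.
case: (ltngtP v (arity l + arity r).+1) => [?|?|->]; [|lia|by rewrite /= ltnn].
by move: red_v; rewrite right_col ?(negbTE (tree_col_1_neq_Red _ _)) //; lia.
Qed.

Lemma apex_tree_col :
  normal (Node g l r) -> apex f (arity l + arity r) = (arity l).+1.
Proof.
case/and3P=> Rl Nl _; have := arity_gt0 l; have := arity_gt0 r => ? ?.
have [d le_d walk_l] : exists2 d, d <= arity l &
    iter d (walk_step f (arity l + arity r).+1) (last_blue l) = (arity l).+1.
  apply: walk_reaches_end => // [w v ? ? ?|w v ? ? ? ?|]; last lia.
    by rewrite f_col /=; [case_ifs | lia ..].
  by rewrite f_col /=; [case_ifs | lia ..].
have le_d_n : d <= arity l + arity r by lia.
rewrite /apex last_blue_root -[X in iter X](subnK le_d_n) iterD walk_l.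
exact/iter_fix/walk_step_apex.
Qed.

End Apex.

Lemma tree_col_root g l r : tree_col (Node g l r) 1 (arity l + arity r).+1 = gen_col g.
Proof. by rewrite tree_colN !eqxx. Qed.

Lemma tree_col_glued g l r : tree_col (Node g l r) (arity l).+1 (arity l + arity r).+1 =
  glue_col (gen_col g) (base_col r).
Proof. by have := arity_gt0 l; have := arity_gt0 r => ? ?; rewrite tree_colN; case_ifs. Qed.

Lemma tree_col_left g l r i j : 0 < i -> i < j -> j <= (arity l).+1 ->
  tree_col (Node g l r) i j = tree_col l i j.
Proof. by have := arity_gt0 r => *; rewrite tree_colN; case_ifs. Qed.

Lemma glue_gen_col_inj g b1 b2 : b1 != Red -> b2 != Red ->
  glue_col (gen_col g) b1 = glue_col (gen_col g) b2 -> b1 = b2.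
Proof. by case: g; case: b1; case: b2. Qed.

Lemma gen_col_inj : injective gen_col.
Proof. by case; case. Qed.

Lemma normal_tree_col_inj t1 t2 : normal t1 -> normal t2 -> arity t1 = arity t2 ->
    (forall i j, 0 < i -> i < j -> j <= (arity t1).+1 -> tree_col t1 i j = tree_col t2 i j) ->
  t1 = t2.
Proof.
elim: t1 t2 => [|g l IHl r IHr] [|g' l' r'] // N1 N2 /= A same.
- by have := arity_gt0 l'; have := arity_gt0 r'; lia.
- by have := arity_gt0 l; have := arity_gt0 r; lia.
have := arity_gt0 l; have := arity_gt0 r => ? ?.
have := arity_gt0 l'; have := arity_gt0 r' => ? ?.
have same_at i j : 0 < i -> i < j -> j <= (arity l + arity r).+1 ->
    tree_col (Node g l r) i j = tree_col (Node g' l' r') i j by exact: same.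
have Eg : g = g'.
  move: (same_at 1 (arity l + arity r).+1 isT (ltac:(lia)) (leqnn _)).
  by rewrite tree_col_root A tree_col_root => /gen_col_inj.
subst g'.
have Ek : arity l = arity l'.
  have apex_l := @apex_tree_col g l r _ (fun w v a b c => esym (same_at w v a b c)) N1.
  have apex_l' := @apex_tree_col g l' r' _ (fun w v _ _ _ => erefl) N2.
  by move: apex_l; rewrite A apex_l' => /succn_inj.
have Er : arity r = arity r' by lia.
case/and3P: N1 N2 => _ Nl Nr /and3P [_ Nl' Nr']; congr Node.
  apply: IHl => // i j ? ? ?.
  rewrite -(@tree_col_left g l r) // same_at; [|lia ..].
  by rewrite (@tree_col_left g l' r') // -Ek.
apply: IHr => // i j *.
have glued := same_at (arity l).+1 (arity l + arity r).+1 isT (ltac:(lia)) (leqnn _).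
rewrite tree_col_glued A Ek tree_col_glued in glued.
have {glued}Eb := glue_gen_col_inj (base_col_neq_Red r) (base_col_neq_Red r') glued.
have [[-> ->]|regular] : (i = 1 /\ j = (arity r).+1) \/ ~ (i = 1 /\ j = (arity r).+1) by lia.
  by rewrite tree_col_base Er tree_col_base.
rewrite -(@tree_col_shift g l r) // same_at; [|lia ..].
by rewrite Ek (@tree_col_shift g l' r') // -Er.
Qed.

Lemma normal_eval_inj t1 t2 : normal t1 -> normal t2 -> eval t1 = eval t2 -> t1 = t2.
Proof.
move=> N1 N2 eval_eq; have A : arity t1 = arity t2 by rewrite -!csize_eval eval_eq.
apply: normal_tree_col_inj => // i j ? ? ?.
by move: (congr1 (fun x => col x i j) eval_eq); rewrite !eval_mkc !col_mkc // -A.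
Qed.

Theorem theorem3p9 :
  (forall t, csize (eval t) = arity t) /\
  (forall t i s, 1 <= i <= arity t ->
     eval (graft t i s) = ccomp (eval t) i (eval s)) /\
  (forall x, inO x <-> exists t, eval t = x) /\
  (forall t1 t2, eval t1 = eval t2 <-> cong t1 t2).
Proof.
split; first exact: csize_eval.
split; first exact: eval_graft.
split; first exact: inO_eval.
move=> t1 t2; split; last exact: eval_cong.
move=> eval_eq; have [u1 C1 N1] := normal_form_exists t1.
have [u2 C2 N2] := normal_form_exists t2.
suff u12 : u1 = u2 by apply: cong_trans C1 _; rewrite u12; exact: cong_sym.
by apply: normal_eval_inj; rewrite // -(eval_cong C1) -(eval_cong C2).
Qed.
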